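(* For every set $S$, the category $\mathbf{CCC}_S$ of $S$-sorted cartesian closed categories is algebraic; more precisely, there is a $(\mathsf{BiMag}_S\times\mathsf{BiMag}_S)$-sorted equational presentation $(\Sigma,E)$ with $\mathbf{Alg}(\Sigma,E)\simeq\mathbf{CCC}_S$.
   Context: $\mathsf{BiMag}_S$ is the set of formal expressions generated inductively by: each $X\in S$, the symbol $1$, and $X\times Y$, $Y^X$ for $X,Y\in\mathsf{BiMag}_S$. $\mathbf{CFam}_S$ is the free cartesian closed category with object set $\mathsf{BiMag}_S$ and no generating morphisms (morphisms generated by identities, $!_X$, projections $\pi_i$, evaluations $\mathrm{ev}^Y_Z$, composition, pairing and currying, modulo the category, product and exponential laws). An $S$-sorted CCC is a CCC $\mathbf{C}$ with $\mathrm{Ob}(\mathbf{C})=\mathsf{BiMag}_S$ together with a cartesian closed identity-on-objects functor $\iota:\mathbf{CFam}_S\to\mathbf{C}$; $\mathbf{CCC}_S$ is the category of these with morphisms the functors $F$ with $F\circ\iota=\iota'$. A category with finite products $\mathbf{L}$ (a Lawvere theory) has category of models $\mathbf{Alg}\,\mathbf{L}$: product-preserving functors $\mathbf{L}\to\mathbf{Set}$ and natural transformations. A category is algebraic if it is equivalent to $\mathbf{Alg}\,\mathbf{L}$ for some such $\mathbf{L}$. For a set of sorts $T$, a $T$-sorted signature assigns to each operation symbol an arity $X_1\cdots X_n\to X$ in $T$; a $T$-sorted equational presentation $(\Sigma,E)$ is a signature with a set $E$ of equations between terms, and $\mathbf{Alg}(\Sigma,E)$ is the category of $\Sigma$-algebras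 (families of sets $A_X$, $X\in T$, with operations) satisfying $E$, with operation-preserving families of maps; such categories are algebraic. *)

From mathcomp Require Import all_boot.
Set Implicit Arguments. Unset Strict Implicit. Unset Printing Implicit Defensive.

Record Category := {
  Ob :> Type;
  Hom : Ob -> Ob -> Type;
  heq : forall a b, Hom a b -> Hom a b -> Prop;
  heq_refl : forall a b (f : Hom a b), heq f f;
  heq_sym : forall a b (f g : Hom a b), heq f g -> heq g f;
  heq_trans : forall a b (f g h : Hom a b), heq f g -> heq g h -> heq f h;
  idm : forall a, Hom a a;
  cmp : forall a b c, Hom b c -> Hom a b -> Hom a c;
  cmp_proper : forall a b c (f f' : Hom b c) (g g' : Hom a b),
      heq f f' -> heq g g' -> heq (cmp f g) (cmp f' g');
  cmp_id_l : forall a b (f : Hom a b), heq (cmp (idm b) f) f;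
  cmp_id_r : forall a b (f : Hom a b), heq (cmp f (idm a)) f;
  cmp_assoc : forall a b c d (f : Hom c d) (g : Hom b c) (h : Hom a b),
      heq (cmp f (cmp g h)) (cmp (cmp f g) h)
}.
Arguments idm {_} _.
Arguments cmp {_ _ _ _} _ _.
Arguments heq {_ _ _} _ _.

Record Functor (C D : Category) := {
  fobj :> C -> D;
  fmap : forall a b, Hom a b -> Hom (fobj a) (fobj b);
  fmap_proper : forall a b (f g : Hom a b), heq f g -> heq (fmap f) (fmap g);
  fmap_id : forall a, heq (fmap (idm a)) (idm (fobj a));
  fmap_cmp : forall a b c (f : Hom b c) (g : Hom a b),
      heq (fmap (cmp f g)) (cmp (fmap f) (fmap g))
}.
Arguments fmap {_ _} _ {_ _} _.

Definition Fid_obj (C : Category) (a : C) : C := a.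

Definition Fid (C : Category) : Functor C C.
Proof.
refine (@Build_Functor C C (fun a => a) (fun a b f => f) _ _ _).
- by [].
- by move=> a; apply: heq_refl.
- by move=> a b c f g; apply: heq_refl.
Defined.

Definition Fcomp (C D E : Category) (G : Functor D E) (F : Functor C D) :
  Functor C E.
Proof.
refine (@Build_Functor C E (fun a => G (F a)) (fun a b f => fmap G (fmap F f))
          _ _ _).
- by move=> a b f g H; apply: fmap_proper; apply: fmap_proper.
- move=> a; apply: heq_trans; last exact: fmap_id.
  by apply: fmap_proper; apply: fmap_id.
- move=> a b c f g; apply: heq_trans; last exact: fmap_cmp.
  by apply: fmap_proper; apply: fmap_cmp.
Defined.

Record Iso (C : Category) (a b : C) := {
  iso_f : Hom a b;
  iso_g : Hom b a;
  iso_gf : heq (cmp iso_g iso_f) (idm a);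
  iso_fg : heq (cmp iso_f iso_g) (idm b)
}.

Record NatIso (C D : Category) (F G : Functor C D) := {
  ni_comp : forall a, Iso (F a) (G a);
  ni_natural : forall a b (f : Hom a b),
      heq (cmp (iso_f (ni_comp b)) (fmap F f)) (cmp (fmap G f) (iso_f (ni_comp a)))
}.

Record CatEquiv (C D : Category) := {
  eqv_F : Functor C D;
  eqv_G : Functor D C;
  eqv_unit : NatIso (Fid C) (Fcomp eqv_G eqv_F);
  eqv_counit : NatIso (Fcomp eqv_F eqv_G) (Fid D)
}.

(* bexp X Y stands for the exponential Y^X. *)
Inductive BiMag (S : Type) : Type :=
| bvar (s : S)
| bone
| bprod (X Y : BiMag S)
| bexp (X Y : BiMag S).
Arguments bone {S}.

Inductive cterm (S : Type) : BiMag S -> BiMag S -> Type :=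
| t_id (X : BiMag S) : cterm X X
| t_comp (X Y Z : BiMag S) : cterm Y Z -> cterm X Y -> cterm X Z
| t_bang (X : BiMag S) : cterm X bone
| t_pi1 (X Y : BiMag S) : cterm (bprod X Y) X
| t_pi2 (X Y : BiMag S) : cterm (bprod X Y) Y
| t_pair (Z X Y : BiMag S) : cterm Z X -> cterm Z Y -> cterm Z (bprod X Y)
| t_ev (Y Z : BiMag S) : cterm (bprod (bexp Y Z) Y) Z
| t_curry (X Y Z : BiMag S) : cterm (bprod X Y) Z -> cterm X (bexp Y Z).
Arguments t_id {S}. Arguments t_comp {S X Y Z}. Arguments t_bang {S}.
Arguments t_pi1 {S}. Arguments t_pi2 {S}. Arguments t_pair {S Z X Y}.
Arguments t_ev {S}. Arguments t_curry {S X Y Z}.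

(* The congruence generated by the category, product and exponential laws;
   the hom-sets of CFam_S are cterm X Y modulo teq. *)
Inductive teq (S : Type) : forall X Y : BiMag S, cterm X Y -> cterm X Y -> Prop :=
| teq_refl X Y (f : cterm X Y) : teq f f
| teq_sym X Y (f g : cterm X Y) : teq f g -> teq g f
| teq_trans X Y (f g h : cterm X Y) : teq f g -> teq g h -> teq f h
| teq_comp X Y Z (f f' : cterm Y Z) (g g' : cterm X Y) :
    teq f f' -> teq g g' -> teq (t_comp f g) (t_comp f' g')
| teq_pair Z X Y (f f' : cterm Z X) (g g' : cterm Z Y) :
    teq f f' -> teq g g' -> teq (t_pair f g) (t_pair f' g')
| teq_curry X Y Z (f f' : cterm (bprod X Y) Z) :
    teq f f' -> teq (t_curry f) (t_curry f')
| teq_id_l X Y (f : cterm X Y) : teq (t_comp (t_id Y) f) f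
| teq_id_r X Y (f : cterm X Y) : teq (t_comp f (t_id X)) f
| teq_assoc W X Y Z (f : cterm Y Z) (g : cterm X Y) (h : cterm W X) :
    teq (t_comp f (t_comp g h)) (t_comp (t_comp f g) h)
| teq_bang X (f : cterm X bone) : teq f (t_bang X)
| teq_pi1_pair Z X Y (f : cterm Z X) (g : cterm Z Y) :
    teq (t_comp (t_pi1 X Y) (t_pair f g)) f
| teq_pi2_pair Z X Y (f : cterm Z X) (g : cterm Z Y) :
    teq (t_comp (t_pi2 X Y) (t_pair f g)) g
| teq_pair_eta Z X Y (h : cterm Z (bprod X Y)) :
    teq (t_pair (t_comp (t_pi1 X Y) h) (t_comp (t_pi2 X Y) h)) h
| teq_ev_curry X Y Z (f : cterm (bprod X Y) Z) :
    teq (t_comp (t_ev Y Z) (t_pair (t_comp (t_curry f) (t_pi1 X Y)) (t_pi2 X Y))) f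
| teq_curry_eta X Y Z (h : cterm X (bexp Y Z)) :
    teq (t_curry (t_comp (t_ev Y Z) (t_pair (t_comp h (t_pi1 X Y)) (t_pi2 X Y)))) h.

(* A category C with Ob(C) = BiMag_S, together with an identity-on-objects
   functor iota : CFam_S -> C (a map on cterm respecting teq, preserving
   identities and composition) which is cartesian closed: the images of
   !_X, pi_1, pi_2, ev exhibit 1, X x Y, Y^X as terminal object, product,
   exponential in C (so C is cartesian closed and iota preserves this). *)
Record SCCC (S : Type) := {
  shom : BiMag S -> BiMag S -> Type;
  sid : forall X, shom X X;
  scmp : forall X Y Z, shom Y Z -> shom X Y -> shom X Z;
  sid_l : forall X Y (f : shom X Y), scmp (sid Y) f = f;
  sid_r : forall X Y (f : shom X Y), scmp f (sid X) = f;
  sassoc : forall W X Y Z (f : shom Y Z) (g : shom X Y) (h : shom W X),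
      scmp f (scmp g h) = scmp (scmp f g) h;
  iota : forall X Y, cterm X Y -> shom X Y;
  iota_teq : forall X Y (t u : cterm X Y), teq t u -> iota t = iota u;
  iota_id : forall X, iota (t_id X) = sid X;
  iota_comp : forall X Y Z (t : cterm Y Z) (u : cterm X Y),
      iota (t_comp t u) = scmp (iota t) (iota u);
  s_terminal : forall X, exists! f : shom X bone, True;
  s_product : forall Z X Y (f : shom Z X) (g : shom Z Y),
      exists! h : shom Z (bprod X Y),
        scmp (iota (t_pi1 X Y)) h = f /\ scmp (iota (t_pi2 X Y)) h = g;
  s_exponential : forall X Y Z (f : shom (bprod X Y) Z),
      exists! h : shom X (bexp Y Z),
        forall k : shom (bprod X Y) (bprod (bexp Y Z) Y),
          scmp (iota (t_pi1 (bexp Y Z) Y)) k = scmp h (iota (t_pi1 X Y)) ->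
          scmp (iota (t_pi2 (bexp Y Z) Y)) k = iota (t_pi2 X Y) ->
          scmp (iota (t_ev Y Z)) k = f
}.
Arguments sid {_} _ _. Arguments scmp {_} _ {_ _ _} _ _. Arguments iota {_} _ {_ _} _.

(* Morphisms of CCC_S: functors F : C -> D with F o iota = iota'.  Such an
   F is necessarily the identity on objects, so it is given by its action
   on morphisms. *)
Record SCCCHom (S : Type) (C D : SCCC S) := {
  hmap : forall X Y, shom C X Y -> shom D X Y;
  hmap_id : forall X, hmap (sid C X) = sid D X;
  hmap_cmp : forall X Y Z (f : shom C Y Z) (g : shom C X Y),
      hmap (scmp C f g) = scmp D (hmap f) (hmap g);
  hmap_iota : forall X Y (t : cterm X Y), hmap (iota C t) = iota D t
}.
Arguments hmap {_ _ _} _ {_ _} _.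

Definition SCCCHom_id (S : Type) (C : SCCC S) : SCCCHom C C.
Proof. by refine (@Build_SCCCHom S C C (fun X Y f => f) _ _ _). Defined.

Definition SCCCHom_cmp (S : Type) (C D E : SCCC S)
  (G : SCCCHom D E) (F : SCCCHom C D) : SCCCHom C E.
Proof.
refine (@Build_SCCCHom S C E (fun X Y f => hmap G (hmap F f)) _ _ _).
- by move=> X; rewrite !hmap_id.
- by move=> X Y Z f g; rewrite !hmap_cmp.
- by move=> X Y t; rewrite !hmap_iota.
Defined.

Definition CCC_cat (S : Type) : Category.
Proof.
refine (@Build_Category (SCCC S) (@SCCCHom S)
          (fun C D F G => forall X Y (f : shom C X Y), hmap F f = hmap G f)
          _ _ _ (@SCCCHom_id S) (@SCCCHom_cmp S) _ _ _ _).
- by [].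
- by move=> a b f g H X Y h; rewrite H.
- by move=> a b f g h H1 H2 X Y k; rewrite H1 H2.
- by move=> a b c f f' g g' H1 H2 X Y k; rewrite /= H2 H1.
- by [].
- by [].
- by [].
Defined.

Record Signature (T : Type) := {
  sop : Type;
  sar : sop -> nat;
  sin : forall o : sop, 'I_(sar o) -> T;
  sout : sop -> T
}.
Arguments sar {T s}. Arguments sin {T s o}. Arguments sout {T s}.

Inductive Tm (T : Type) (sg : Signature T) (n : nat) (ctx : 'I_n -> T) : T -> Type :=
| tvar (i : 'I_n) : Tm sg ctx (ctx i)
| tapp (o : sop sg) (args : forall j : 'I_(sar o), Tm sg ctx (sin j)) :
    Tm sg ctx (sout o).

Record Equation (T : Type) (sg : Signature T) := {
  eq_n : nat;
  eq_ctx : 'I_eq_n -> T;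
  eq_sort : T;
  eq_lhs : Tm sg eq_ctx eq_sort;
  eq_rhs : Tm sg eq_ctx eq_sort
}.

Record Presentation (T : Type) := {
  psig : Signature T;
  pE : Type;
  peq : pE -> Equation psig
}.

Fixpoint eval (T : Type) (sg : Signature T) (A : T -> Type)
  (op : forall o : sop sg, (forall j : 'I_(sar o), A (sin j)) -> A (sout o))
  (n : nat) (ctx : 'I_n -> T) (env : forall i, A (ctx i))
  (s : T) (t : Tm sg ctx s) {struct t} : A s :=
  match t in Tm _ _ s0 return A s0 with
  | tvar i => env i
  | tapp o args => op o (fun j => eval op env (args j))
  end.

Record Alg (T : Type) (P : Presentation T) := {
  car : T -> Type;
  aop : forall o : sop (psig P), (forall j : 'I_(sar o), car (sin j)) -> car (sout o);
  asat : forall (e : pE P) (env : forall i, car (@eq_ctx _ _ (peq e) i)),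
      eval aop env (eq_lhs (peq e)) = eval aop env (eq_rhs (peq e))
}.

Record AlgHom (T : Type) (P : Presentation T) (A B : Alg P) := {
  amap : forall s, car A s -> car B s;
  amap_op : forall (o : sop (psig P)) (args : forall j, car A (sin j)),
      amap (@aop _ _ A o args) = @aop _ _ B o (fun j => amap (args j))
}.
Arguments amap {_ _ _ _} _ {_} _.

Definition AlgHom_id (T : Type) (P : Presentation T) (A : Alg P) : AlgHom A A.
Proof. by refine (@Build_AlgHom T P A A (fun s x => x) _). Defined.

Definition AlgHom_cmp (T : Type) (P : Presentation T) (A B C : Alg P)
  (g : AlgHom B C) (f : AlgHom A B) : AlgHom A C.
Proof.
refine (@Build_AlgHom T P A C (fun s x => amap g (amap f x)) _).
by move=> o args; rewrite !amap_op.
Defined.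

Definition Alg_cat (T : Type) (P : Presentation T) : Category.
Proof.
refine (@Build_Category (Alg P) (@AlgHom T P)
          (fun A B f g => forall s (x : car A s), amap f x = amap g x)
          _ _ _ (@AlgHom_id T P) (@AlgHom_cmp T P) _ _ _ _).
- by [].
- by move=> a b f g H s x; rewrite H.
- by move=> a b f g h H1 H2 s x; rewrite H1 H2.
- by move=> a b c f f' g g' H1 H2 s x; rewrite /= H2 H1.
- by [].
- by [].
- by [].
Defined.

(* An S-sorted cartesian closed category is determined by its hom-sets C(X, Y), one sort per
   pair of objects, together with: a constant for each morphism of CFam_S (its image under iota),
   composition, pairing and currying.  The universal properties of 1, X x Y and Y^X are
   equational: uniqueness of maps into 1, and the beta and eta laws for pairing and currying.
   So S-sorted CCCs are exactly the models of these operations and laws.  Since pairing and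
   currying are uniquely determined by the universal properties, every functor commuting with
   iota preserves them, hence morphisms of CCC_S are exactly the algebra homomorphisms; the two
   translations are inverse up to the evident natural isomorphisms. *)

From mathcomp Require Import all_boot.
From Stdlib Require Import FunctionalExtensionality ClassicalEpsilon.
Set Implicit Arguments. Unset Strict Implicit. Unset Printing Implicit Defensive.

Section HList.
Variables (T : Type) (d : T).

Fixpoint hlist (A : T -> Type) (l : seq T) : Type :=
  if l is s :: l' then (A s * hlist A l')%type else unit.

Lemma ord0_absurd (j : 'I_0) : False. Proof. by case: j. Qed.

Fixpoint hget (A : T -> Type) (l : seq T) :
    hlist A l -> forall j : 'I_(size l), A (nth d l j) :=
  match l return hlist A l -> forall j : 'I_(size l), A (nth d l j) with
  | [::] => fun _ j => False_rect _ (ord0_absurd j)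
  | s :: l' => fun p '(Ordinal m lt_m) =>
      match m return m < (size l').+1 -> A (nth d (s :: l') m) with
      | 0 => fun _ => p.1
      | m'.+1 => fun lt_m' => hget p.2 (@Ordinal (size l') m' lt_m')
      end lt_m
  end.

Fixpoint htab (A : T -> Type) (l : seq T) :
    (forall j : 'I_(size l), A (nth d l j)) -> hlist A l :=
  match l return (forall j : 'I_(size l), A (nth d l j)) -> hlist A l with
  | [::] => fun _ => tt
  | s :: l' => fun f => (f (@Ordinal (size l').+1 0 erefl),
                         htab (fun j : 'I_(size l') => f (@Ordinal (size l').+1 j.+1 (ltn_ord j))))
  end.

Fixpoint hlist_map (A B : T -> Type) (g : forall s, A s -> B s) (l : seq T) :
    hlist A l -> hlist B l :=
  if l is s :: l' then fun p => (g s p.1, hlist_map g p.2) else fun _ => tt.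

Lemma hget_htab A l (f : forall j : 'I_(size l), A (nth d l j)) : hget (htab f) = f.
Proof.
apply: functional_extensionality_dep.
elim: l f => [|s l IH] f j; first by case: (ord0_absurd j).
case: j => [[|m] lt_m] /=; first by rewrite (bool_irrelevance lt_m erefl).
by rewrite IH /=; move: (ltn_ord _) => lt_m'; rewrite (bool_irrelevance lt_m' lt_m).
Qed.

Lemma hget_hlist_map A B (g : forall s, A s -> B s) l (p : hlist A l) :
  hget (hlist_map g p) = fun j => g _ (hget p j).
Proof.
apply: functional_extensionality_dep.
elim: l p => [|s l IH] p j; first by case: (ord0_absurd j).
by case: j => [[|m] lt_m] //=; rewrite IH.
Qed.
End HList.
Arguments hget {T} d {A l} & p.

Section Presentation.
Variable S : Type.
Local Notation sort := (BiMag S * BiMag S)%type.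
Local Notation sort0 := ((bone, bone) : sort).

Inductive ccc_op : Type :=
| op_const (X Y : BiMag S) (t : cterm X Y)
| op_comp (X Y Z : BiMag S)
| op_pair (Z X Y : BiMag S)
| op_curry (X Y Z : BiMag S).

Definition op_in (o : ccc_op) : seq sort :=
  match o with
  | op_const _ _ _ => [::]
  | op_comp X Y Z => [:: (Y, Z); (X, Y)]
  | op_pair Z X Y => [:: (Z, X); (Z, Y)]
  | op_curry X Y Z => [:: (bprod X Y, Z)]
  end.

Definition op_out (o : ccc_op) : sort :=
  match o with
  | op_const X Y _ => (X, Y)
  | op_comp X _ Z => (X, Z)
  | op_pair Z X Y => (Z, bprod X Y)
  | op_curry X Y Z => (X, bexp Y Z)
  end.

Definition ccc_sig : Signature sort :=
  @Build_Signature sort ccc_op (fun o => size (op_in o)) (fun o j => nth sort0 (op_in o) j) op_out.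

Section Terms.
Variable cl : seq sort.
Local Notation tm := (@Tm sort ccc_sig (size cl) (fun i => nth sort0 cl i)).

Definition tapp_hlist (o : ccc_op) (p : hlist tm (op_in o)) : tm (op_out o) :=
  @tapp _ ccc_sig _ _ o (hget sort0 p).

Definition tconst X Y (t : cterm X Y) : tm (X, Y) := tapp_hlist (o := op_const t) tt.
Definition tcomp X Y Z (a : tm (Y, Z)) (b : tm (X, Y)) : tm (X, Z) :=
  tapp_hlist (o := op_comp X Y Z) (a, (b, tt)).
Definition tpair Z X Y (a : tm (Z, X)) (b : tm (Z, Y)) : tm (Z, bprod X Y) :=
  tapp_hlist (o := op_pair Z X Y) (a, (b, tt)).
Definition tcurry X Y Z (a : tm (bprod X Y, Z)) : tm (X, bexp Y Z) :=
  tapp_hlist (o := op_curry X Y Z) (a, tt).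
Definition tvar_at k (lt_k : k < size cl) : tm (nth sort0 cl k) :=
  @tvar _ ccc_sig _ _ (Ordinal lt_k).

Definition equation s (l r : tm s) : Equation ccc_sig := Build_Equation l r.

Variables (A : sort -> Type) (op : forall o, (forall j, A (@sin _ ccc_sig o j)) -> A (sout o)).
Variable env : forall i : 'I_(size cl), A (nth sort0 cl i).

Lemma eval_tapp_hlist o (p : hlist tm (op_in o)) :
  eval op env (tapp_hlist p) = @op o (hget sort0 (hlist_map (fun s t => eval op env t) p)).
Proof. by rewrite hget_hlist_map. Qed.

Lemma eval_tconst X Y (t : cterm X Y) :
  eval op env (tconst t) = @op (op_const t) (hget sort0 (l := [::]) tt).
Proof. exact: (eval_tapp_hlist (o := op_const t)). Qed.

Lemma eval_tcomp X Y Z a b :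
  eval op env (@tcomp X Y Z a b) =
  @op (op_comp X Y Z) (hget sort0 (eval op env a, (eval op env b, tt))).
Proof. exact: (eval_tapp_hlist (o := op_comp X Y Z)). Qed.

Lemma eval_tpair Z X Y a b :
  eval op env (@tpair Z X Y a b) =
  @op (op_pair Z X Y) (hget sort0 (eval op env a, (eval op env b, tt))).
Proof. exact: (eval_tapp_hlist (o := op_pair Z X Y)). Qed.

Lemma eval_tcurry X Y Z a :
  eval op env (@tcurry X Y Z a) = @op (op_curry X Y Z) (hget sort0 (eval op env a, tt)).
Proof. exact: (eval_tapp_hlist (o := op_curry X Y Z)). Qed.
End Terms.
(* The context of a variable [#k] is only known from the expected type, so the result type of
   each term former is unified with it before its arguments are elaborated. *)
Arguments tconst {cl X Y} & t.
Arguments tcomp {cl X Y Z} & a b.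
Arguments tpair {cl Z X Y} & a b.
Arguments tcurry {cl X Y Z} & a.
Arguments tvar_at {cl} k & lt_k.
Local Notation "# k" := (@tvar_at _ k erefl) (at level 2, format "# k").

Inductive ccc_axiom : Type :=
| ax_cterm (X Y : BiMag S) (t u : cterm X Y) of teq t u
| ax_comp_const (X Y Z : BiMag S) (t : cterm Y Z) (u : cterm X Y)
| ax_id_l (X Y : BiMag S) | ax_id_r (X Y : BiMag S) | ax_assoc (W X Y Z : BiMag S)
| ax_bang (X : BiMag S)
| ax_pi1 (Z X Y : BiMag S) | ax_pi2 (Z X Y : BiMag S) | ax_pair_eta (Z X Y : BiMag S)
| ax_curry_beta (X Y Z : BiMag S) | ax_curry_eta (X Y Z : BiMag S).

Definition ccc_equation (e : ccc_axiom) : Equation ccc_sig :=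
  match e with
  | ax_cterm X Y t u _ => @equation [::] _ (tconst t) (tconst u)
  | ax_comp_const X Y Z t u =>
      @equation [::] _ (tconst (t_comp t u)) (tcomp (tconst t) (tconst u))
  | ax_id_l X Y => @equation [:: (X, Y)] _ (tcomp (tconst (t_id Y)) #0) #0
  | ax_id_r X Y => @equation [:: (X, Y)] _ (tcomp #0 (tconst (t_id X))) #0
  | ax_assoc W X Y Z =>
      @equation [:: (Y, Z); (X, Y); (W, X)] _ (tcomp #0 (tcomp #1 #2)) (tcomp (tcomp #0 #1) #2)
  | ax_bang X => @equation [:: (X, bone)] _ #0 (tconst (t_bang X))
  | ax_pi1 Z X Y =>
      @equation [:: (Z, X); (Z, Y)] _ (tcomp (tconst (t_pi1 X Y)) (tpair #0 #1)) #0
  | ax_pi2 Z X Y =>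
      @equation [:: (Z, X); (Z, Y)] _ (tcomp (tconst (t_pi2 X Y)) (tpair #0 #1)) #1
  | ax_pair_eta Z X Y =>
      @equation [:: (Z, bprod X Y)] _
        (tpair (tcomp (tconst (t_pi1 X Y)) #0) (tcomp (tconst (t_pi2 X Y)) #0)) #0
  | ax_curry_beta X Y Z =>
      @equation [:: (bprod X Y, Z)] _
        (tcomp (tconst (t_ev Y Z))
           (tpair (tcomp (tcurry #0) (tconst (t_pi1 X Y))) (tconst (t_pi2 X Y)))) #0
  | ax_curry_eta X Y Z =>
      @equation [:: (X, bexp Y Z)] _
        (tcurry (tcomp (tconst (t_ev Y Z))
           (tpair (tcomp #0 (tconst (t_pi1 X Y))) (tconst (t_pi2 X Y))))) #0
  end.

Definition ccc_presentation : Presentation sort := Build_Presentation ccc_equation.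
End Presentation.

Section ChosenStructure.
Variables (S : Type) (C : SCCC S).
Local Notation hom := (shom C).

Lemma sterminal_unique X (f g : hom X bone) : f = g.
Proof. by case: (s_terminal C X) => h [_ h_uniq]; rewrite -(h_uniq f) // -(h_uniq g). Qed.

Definition spair Z X Y (f : hom Z X) (g : hom Z Y) : hom Z (bprod X Y) :=
  proj1_sig (constructive_indefinite_description _ (@s_product _ C _ _ _ f g)).

Lemma spairP Z X Y (f : hom Z X) (g : hom Z Y) :
  (scmp C (iota C (t_pi1 X Y)) (spair f g) = f /\ scmp C (iota C (t_pi2 X Y)) (spair f g) = g) /\
  forall h, scmp C (iota C (t_pi1 X Y)) h = f /\ scmp C (iota C (t_pi2 X Y)) h = g -> spair f g = h.
Proof. exact: proj2_sig (constructive_indefinite_description _ (@s_product _ C _ _ _ f g)). Qed.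

Lemma spair_pi1 Z X Y (f : hom Z X) (g : hom Z Y) :
  scmp C (iota C (t_pi1 X Y)) (spair f g) = f.
Proof. by case: (spairP f g) => [[]]. Qed.

Lemma spair_pi2 Z X Y (f : hom Z X) (g : hom Z Y) :
  scmp C (iota C (t_pi2 X Y)) (spair f g) = g.
Proof. by case: (spairP f g) => [[]]. Qed.

Lemma spair_unique Z X Y (f : hom Z X) (g : hom Z Y) h :
  scmp C (iota C (t_pi1 X Y)) h = f -> scmp C (iota C (t_pi2 X Y)) h = g -> h = spair f g.
Proof. by move=> h1 h2; case: (spairP f g) => _ /(_ h (conj h1 h2)). Qed.

Lemma spair_eta Z X Y (h : hom Z (bprod X Y)) :
  spair (scmp C (iota C (t_pi1 X Y)) h) (scmp C (iota C (t_pi2 X Y)) h) = h.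
Proof. by rewrite -(spair_unique (h := h)). Qed.

Definition scurry X Y Z (f : hom (bprod X Y) Z) : hom X (bexp Y Z) :=
  proj1_sig (constructive_indefinite_description _ (@s_exponential _ C _ _ _ f)).

Definition curries X Y Z (f : hom (bprod X Y) Z) (h : hom X (bexp Y Z)) : Prop :=
  forall k : hom (bprod X Y) (bprod (bexp Y Z) Y),
    scmp C (iota C (t_pi1 (bexp Y Z) Y)) k = scmp C h (iota C (t_pi1 X Y)) ->
    scmp C (iota C (t_pi2 (bexp Y Z) Y)) k = iota C (t_pi2 X Y) ->
    scmp C (iota C (t_ev Y Z)) k = f.

Lemma scurryP X Y Z (f : hom (bprod X Y) Z) :
  curries f (scurry f) /\ forall h, curries f h -> scurry f = h.
Proof. exact: proj2_sig (constructive_indefinite_description _ (@s_exponential _ C _ _ _ f)). Qed.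

Lemma scurry_beta X Y Z (f : hom (bprod X Y) Z) :
  scmp C (iota C (t_ev Y Z))
    (spair (scmp C (scurry f) (iota C (t_pi1 X Y))) (iota C (t_pi2 X Y))) = f.
Proof. by case: (scurryP f) => beta _; apply: beta; [exact: spair_pi1 | exact: spair_pi2]. Qed.

Lemma scurry_unique X Y Z (f : hom (bprod X Y) Z) (h : hom X (bexp Y Z)) :
  scmp C (iota C (t_ev Y Z)) (spair (scmp C h (iota C (t_pi1 X Y))) (iota C (t_pi2 X Y))) = f ->
  h = scurry f.
Proof.
move=> beta_h; case: (scurryP f) => _ uniq; symmetry; apply: uniq => k k1 k2.
by rewrite (spair_unique k1 k2).
Qed.

Lemma scurry_eta X Y Z (h : hom X (bexp Y Z)) :
  scurry (scmp C (iota C (t_ev Y Z))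
            (spair (scmp C h (iota C (t_pi1 X Y))) (iota C (t_pi2 X Y)))) = h.
Proof. by rewrite -(scurry_unique (h := h)). Qed.
End ChosenStructure.

Section HomPreservesStructure.
Variables (S : Type) (C D : SCCC S) (F : SCCCHom C D).

Lemma hmap_spair Z X Y (f : shom C Z X) (g : shom C Z Y) :
  hmap F (spair f g) = spair (hmap F f) (hmap F g).
Proof.
by apply: spair_unique; rewrite -(hmap_iota F) -hmap_cmp ?spair_pi1 ?spair_pi2.
Qed.

Lemma hmap_scurry X Y Z (f : shom C (bprod X Y) Z) :
  hmap F (scurry f) = scurry (hmap F f).
Proof.
by apply: scurry_unique; rewrite -!(hmap_iota F) -hmap_cmp -hmap_spair -hmap_cmp scurry_beta.
Qed.
End HomPreservesStructure.

Section AlgOfSCCC.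
Variables (S : Type) (C : SCCC S).
Local Notation sort0 := ((bone, bone) : (BiMag S * BiMag S)%type).

Definition sccc_car (p : BiMag S * BiMag S) : Type := shom C p.1 p.2.

Definition sccc_op (o : sop (ccc_sig S)) :
    (forall j : 'I_(sar o), sccc_car (sin j)) -> sccc_car (sout o) :=
  match o return (forall j : 'I_(size (op_in o)), sccc_car (nth sort0 (op_in o) j)) ->
                 sccc_car (op_out o) with
  | op_const X Y t => fun _ => iota C t
  | op_comp X Y Z => fun args => let p := htab args in scmp C p.1 p.2.1
  | op_pair Z X Y => fun args => let p := htab args in spair p.1 p.2.1
  | op_curry X Y Z => fun args => scurry (htab args).1
  end.

Lemma sccc_op_sat (e : ccc_axiom S) (env : forall i, sccc_car (@eq_ctx _ _ (ccc_equation e) i)) :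
  eval sccc_op env (eq_lhs (ccc_equation e)) = eval sccc_op env (eq_rhs (ccc_equation e)).
Proof.
case: e env => [X Y t u tu | X Y Z t u | X Y | X Y | W X Y Z | X | Z X Y | Z X Y | Z X Y
                   | X Y Z | X Y Z] env /=.
- exact: iota_teq.
- exact: iota_comp.
- by rewrite iota_id sid_l.
- by rewrite iota_id sid_r.
- exact: sassoc.
- exact: sterminal_unique.
- exact: spair_pi1.
- exact: spair_pi2.
- exact: spair_eta.
- exact: scurry_beta.
- exact: scurry_eta.
Qed.

Definition alg_of_sccc : Alg (ccc_presentation S) :=
  @Build_Alg _ (ccc_presentation S) sccc_car sccc_op sccc_op_sat.
End AlgOfSCCC.

Section SCCCOfAlg.
Variables (S : Type) (A : Alg (ccc_presentation S)).
Local Notation sort0 := ((bone, bone) : (BiMag S * BiMag S)%type).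

Definition ahom (X Y : BiMag S) : Type := car A (X, Y).

Definition aconst X Y (t : cterm X Y) : ahom X Y :=
  @aop _ _ A (op_const t) (hget sort0 (l := [::]) tt).
Definition acomp X Y Z (f : ahom Y Z) (g : ahom X Y) : ahom X Z :=
  @aop _ _ A (op_comp X Y Z) (hget sort0 (f, (g, tt))).
Definition apair Z X Y (f : ahom Z X) (g : ahom Z Y) : ahom Z (bprod X Y) :=
  @aop _ _ A (op_pair Z X Y) (hget sort0 (f, (g, tt))).
Definition acurry X Y Z (f : ahom (bprod X Y) Z) : ahom X (bexp Y Z) :=
  @aop _ _ A (op_curry X Y Z) (hget sort0 (f, tt)).

Ltac axiom_instance e vars :=
  have := @asat _ _ A e (hget sort0 vars);
  cbn [peq ccc_presentation ccc_equation eq_lhs eq_rhs equation];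
  rewrite ?(eval_tconst, eval_tcomp, eval_tpair, eval_tcurry);
  exact.

Lemma aconst_teq X Y (t u : cterm X Y) : teq t u -> aconst t = aconst u.
Proof. by move=> tu; axiom_instance (ax_cterm tu) tt. Qed.

Lemma aconst_comp X Y Z (t : cterm Y Z) (u : cterm X Y) :
  aconst (t_comp t u) = acomp (aconst t) (aconst u).
Proof. by axiom_instance (ax_comp_const t u) tt. Qed.

Lemma acomp_id_l X Y (f : ahom X Y) : acomp (aconst (t_id Y)) f = f.
Proof. by axiom_instance (ax_id_l X Y) (f, tt). Qed.

Lemma acomp_id_r X Y (f : ahom X Y) : acomp f (aconst (t_id X)) = f.
Proof. by axiom_instance (ax_id_r X Y) (f, tt). Qed.

Lemma acomp_assoc W X Y Z (f : ahom Y Z) (g : ahom X Y) (h : ahom W X) :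
  acomp f (acomp g h) = acomp (acomp f g) h.
Proof. by axiom_instance (ax_assoc W X Y Z) (f, (g, (h, tt))). Qed.

Lemma aterminal_unique X (f : ahom X bone) : f = aconst (t_bang X).
Proof. by axiom_instance (ax_bang X) (f, tt). Qed.

Lemma apair_pi1 Z X Y (f : ahom Z X) (g : ahom Z Y) :
  acomp (aconst (t_pi1 X Y)) (apair f g) = f.
Proof. by axiom_instance (ax_pi1 Z X Y) (f, (g, tt)). Qed.

Lemma apair_pi2 Z X Y (f : ahom Z X) (g : ahom Z Y) :
  acomp (aconst (t_pi2 X Y)) (apair f g) = g.
Proof. by axiom_instance (ax_pi2 Z X Y) (f, (g, tt)). Qed.

Lemma apair_eta Z X Y (h : ahom Z (bprod X Y)) :
  apair (acomp (aconst (t_pi1 X Y)) h) (acomp (aconst (t_pi2 X Y)) h) = h.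
Proof. by axiom_instance (ax_pair_eta Z X Y) (h, tt). Qed.

Lemma acurry_beta X Y Z (f : ahom (bprod X Y) Z) :
  acomp (aconst (t_ev Y Z))
    (apair (acomp (acurry f) (aconst (t_pi1 X Y))) (aconst (t_pi2 X Y))) = f.
Proof. by axiom_instance (ax_curry_beta X Y Z) (f, tt). Qed.

Lemma acurry_eta X Y Z (h : ahom X (bexp Y Z)) :
  acurry (acomp (aconst (t_ev Y Z))
            (apair (acomp h (aconst (t_pi1 X Y))) (aconst (t_pi2 X Y)))) = h.
Proof. by axiom_instance (ax_curry_eta X Y Z) (h, tt). Qed.

Definition sccc_of_alg : SCCC S.
Proof.
refine (@Build_SCCC S ahom (fun X => aconst (t_id X)) acomp acomp_id_l acomp_id_r acomp_assoc
          aconst aconst_teq (fun X => erefl) aconst_comp _ _ _).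
- move=> X; exists (aconst (t_bang X)); split=> // f _.
  exact/esym/aterminal_unique.
- move=> Z X Y f g; exists (apair f g); split; first by rewrite apair_pi1 apair_pi2.
  by move=> h [<- <-]; rewrite apair_eta.
- move=> X Y Z f; exists (acurry f); split.
  + by move=> k k1 k2; rewrite -(apair_eta k) k1 k2 acurry_beta.
  + move=> h curries_h.
    by rewrite -(curries_h _ (apair_pi1 _ _) (apair_pi2 _ _)) acurry_eta.
Defined.

Lemma spair_sccc_of_alg Z X Y (f : ahom Z X) (g : ahom Z Y) :
  spair (C := sccc_of_alg) f g = apair f g.
Proof.
by symmetry; apply: (spair_unique (C := sccc_of_alg)); [exact: apair_pi1 | exact: apair_pi2].
Qed.

Lemma scurry_sccc_of_alg X Y Z (f : ahom (bprod X Y) Z) :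
  scurry (C := sccc_of_alg) f = acurry f.
Proof.
symmetry; apply: (scurry_unique (C := sccc_of_alg)).
by rewrite spair_sccc_of_alg; exact: acurry_beta.
Qed.
End SCCCOfAlg.

Section Functors.
Variable S : Type.
Local Notation P := (ccc_presentation S).
Local Notation sort0 := ((bone, bone) : (BiMag S * BiMag S)%type).

Lemma amap_aop_hget (A B : Alg P) (f : AlgHom A B) (o : ccc_op S) (p : hlist (car A) (op_in o)) :
  amap f (@aop _ _ A o (hget sort0 p)) =
  @aop _ _ B o (hget sort0 (hlist_map (fun s x => amap f x) p)).
Proof. by rewrite amap_op hget_hlist_map. Qed.

Definition sccc_of_alg_hom (A B : Alg P) (f : AlgHom A B) :
  SCCCHom (sccc_of_alg A) (sccc_of_alg B).
Proof.
refine (@Build_SCCCHom S (sccc_of_alg A) (sccc_of_alg B) (fun X Y x => amap f x) _ _ _).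
- by move=> X; exact: (amap_aop_hget f (o := op_const (t_id X)) tt).
- by move=> X Y Z g h; exact: (amap_aop_hget f (o := op_comp X Y Z) (g, (h, tt))).
- by move=> X Y t; exact: (amap_aop_hget f (o := op_const t) tt).
Defined.

Definition sccc_of_alg_functor : Functor (Alg_cat P) (CCC_cat S).
Proof.
refine (@Build_Functor (Alg_cat P) (CCC_cat S) (@sccc_of_alg S) sccc_of_alg_hom _ _ _) => //.
by move=> A B f g fg X Y x; exact: fg.
Defined.

Definition alg_of_sccc_hom (C D : SCCC S) (F : SCCCHom C D) :
  AlgHom (alg_of_sccc C) (alg_of_sccc D).
Proof.
refine (@Build_AlgHom _ P (alg_of_sccc C) (alg_of_sccc D) (fun s x => hmap F x) _).
case=> [X Y t | X Y Z | Z X Y | X Y Z] args /=.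
- exact: hmap_iota.
- exact: hmap_cmp.
- exact: hmap_spair.
- exact: hmap_scurry.
Defined.

Definition alg_of_sccc_functor : Functor (CCC_cat S) (Alg_cat P).
Proof.
refine (@Build_Functor (CCC_cat S) (Alg_cat P) (@alg_of_sccc S) alg_of_sccc_hom _ _ _) => //.
by move=> C D F G FG s x; exact: FG.
Defined.
End Functors.

Section Equivalence.
Variable S : Type.
Local Notation P := (ccc_presentation S).

Section Unit.
Variable A : Alg P.

(* The carrier of [alg_of_sccc (sccc_of_alg A)] at [s] is [car A (s.1, s.2)], which is
   [car A s] only after case analysis on the pair [s]. *)
Definition unit_fun (s : BiMag S * BiMag S) : car A s -> car A (s.1, s.2) :=
  let: (X, Y) := s in id.
Definition unit_inv_fun (s : BiMag S * BiMag S) : car A (s.1, s.2) -> car A s :=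
  let: (X, Y) := s in id.

Definition unit_hom : AlgHom A (alg_of_sccc (sccc_of_alg A)).
Proof.
refine (@Build_AlgHom _ P A (alg_of_sccc (sccc_of_alg A)) unit_fun _).
case=> [X Y t | X Y Z | Z X Y | X Y Z] args /=;
  by rewrite ?spair_sccc_of_alg ?scurry_sccc_of_alg -{1}(hget_htab args).
Defined.

Definition unit_inv : AlgHom (alg_of_sccc (sccc_of_alg A)) A.
Proof.
refine (@Build_AlgHom _ P (alg_of_sccc (sccc_of_alg A)) A unit_inv_fun _).
case=> [X Y t | X Y Z | Z X Y | X Y Z] args /=;
  by rewrite ?spair_sccc_of_alg ?scurry_sccc_of_alg
            -[in RHS](hget_htab (fun j => unit_inv_fun (args j))).
Defined.

Definition unit_iso : Iso (C := Alg_cat P) A (alg_of_sccc (sccc_of_alg A)).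
Proof. by refine (@Build_Iso (Alg_cat P) _ _ unit_hom unit_inv _ _); case. Defined.
End Unit.

Definition unit_nat_iso :
  NatIso (Fid (Alg_cat P)) (Fcomp (alg_of_sccc_functor S) (sccc_of_alg_functor S)).
Proof.
by refine (@Build_NatIso _ _ (Fid _) (Fcomp (alg_of_sccc_functor S) (sccc_of_alg_functor S))
             unit_iso _) => A B f; case.
Defined.

Section Counit.
Variable C : SCCC S.

Definition counit_hom : SCCCHom (sccc_of_alg (alg_of_sccc C)) C.
Proof.
refine (@Build_SCCCHom S (sccc_of_alg (alg_of_sccc C)) C (fun X Y x => x) _ _ _) => //.
exact: iota_id.
Defined.

Definition counit_inv : SCCCHom C (sccc_of_alg (alg_of_sccc C)).
Proof.
refine (@Build_SCCCHom S C (sccc_of_alg (alg_of_sccc C)) (fun X Y x => x) _ _ _) => //.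
by move=> X; rewrite /= iota_id.
Defined.

Definition counit_iso : Iso (C := CCC_cat S) (sccc_of_alg (alg_of_sccc C)) C.
Proof. by refine (@Build_Iso (CCC_cat S) _ _ counit_hom counit_inv _ _). Defined.
End Counit.

Definition counit_nat_iso :
  NatIso (Fcomp (sccc_of_alg_functor S) (alg_of_sccc_functor S)) (Fid (CCC_cat S)).
Proof.
by refine (@Build_NatIso _ _ (Fcomp (sccc_of_alg_functor S) (alg_of_sccc_functor S)) (Fid _)
             counit_iso _).
Defined.
End Equivalence.

Theorem mainTheorem7 (S : Type) :
  exists P : Presentation (BiMag S * BiMag S)%type,
    inhabited (CatEquiv (Alg_cat P) (CCC_cat S)).
Proof.
exists (ccc_presentation S); constructor.
exact: Build_CatEquiv (unit_nat_iso S) (counit_nat_iso S).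
Qed.
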